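(* Let $n\in\mathbb N_+$ and let $\nu$ be a probability measure on $\mathbb R$ with compact support such that $\int_\mathbb R\lambda\,d\nu=0$. Let $\lambda_{\max}=\max\operatorname{supp}\nu$ and suppose $g(\lambda)=\nu\{x\ge\lambda\}^{1/n}$ is concave on $(-\infty,\lambda_{\max})$. Then $g(-t\lambda_{\max})\ge1-\frac{1}{\sqrt{nt}}$ for all $t>0$. *)

From Stdlib Require Import Reals Lra.
Open Scope R_scope.

(* A probability measure nu on R with compact support is encoded by its
   (upper) tail function  G lam = nu [lam, +oo)  (Lebesgue-Stieltjes
   correspondence): G is nonincreasing, left-continuous, equal to 1 far
   to the left and to 0 far to the right (M bounds the support:
   supp nu is contained in [-M, M]). *)
Definition compact_prob_tail (G : R -> R) (M : R) : Prop :=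
  (forall x y, x <= y -> G y <= G x) /\
  (forall x eps, 0 < eps -> exists delta, 0 < delta /\
      forall y, x - delta < y <= x -> Rabs (G y - G x) < eps) /\
  (forall x, x <= - M -> G x = 1) /\
  (forall x, M < x -> G x = 0).

(* Mean of nu, via the layer-cake formula
   int lam dnu = int_0^M nu[lam,oo) dlam - int_{-M}^0 (1 - nu[lam,oo)) dlam.
   The condition "int lam dnu = 0": *)
Definition tail_mean_zero (G : R -> R) (M : R) : Prop :=
  exists (pr1 : Riemann_integrable G 0 M)
         (pr2 : Riemann_integrable (fun x => 1 - G x) (- M) 0),
    RiemannInt pr1 - RiemannInt pr2 = 0.

Definition is_max_supp (G : R -> R) (lmax : R) : Prop :=
  is_lub (fun x => 0 < G x) lmax.

Definition nroot (n : nat) (x : R) : R :=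
  if Rle_dec x 0 then 0 else Rpower x (/ INR n).

Definition concave_below (f : R -> R) (b : R) : Prop :=
  forall x y s, x < b -> y < b -> 0 <= s <= 1 ->
    s * f x + (1 - s) * f y <= f (s * x + (1 - s) * y).

(* Mean zero alone gives a Markov-type estimate: balancing the positive part
   of the mean, at most lmax * nu[u, oo), against the negative part, at least
   (-u) * nu(-oo, u), yields nu[-t lmax, oo) >= t / (1 + t).  Bernoulli's
   inequality (1 - s)^n (1 + n s) <= 1 at s = 1 / sqrt (n t) then shows that
   (1 - 1 / sqrt (n t))^n <= t / (1 + t), whenever n t >= 1. *)

From Stdlib Require Import Reals Lra Lia.
Open Scope R_scope.

Lemma pow_one_sub_mul_one_add_le (n : nat) (s : R) :
  0 <= s <= 1 -> (1 - s) ^ n * (1 + INR n * s) <= 1.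
Proof.
  intros Hs. induction n as [|n IH].
  - simpl. lra.
  - rewrite S_INR. simpl.
    assert (Hpow : 0 <= (1 - s) ^ n) by (apply pow_le; lra).
    assert (Hn : 0 <= INR n) by apply pos_INR.
    assert (Hdrop : 0 <= (1 - s) ^ n * (INR n * s * s + s * s)).
    { apply Rmult_le_pos; [lra | nra]. }
    replace ((1 - s) * (1 - s) ^ n * (1 + (INR n + 1) * s))
      with ((1 - s) ^ n * (1 + INR n * s) - (1 - s) ^ n * (INR n * s * s + s * s))
      by ring.
    lra.
Qed.

Lemma nroot_ge0 (n : nat) (x : R) : 0 <= nroot n x.
Proof.
  unfold nroot, Rpower. destruct (Rle_dec x 0); [lra |].
  left. apply exp_pos.
Qed.

Lemma nroot_ge_of_pow_le (n : nat) (x y : R) :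
  (1 <= n)%nat -> 0 < y -> y ^ n <= x -> y <= nroot n x.
Proof.
  intros Hn Hy Hyx.
  assert (Hn0 : 0 < INR n) by (apply lt_0_INR; lia).
  assert (Hyn : 0 < y ^ n) by (apply pow_lt; lra).
  unfold nroot. destruct (Rle_dec x 0) as [Hx | _]; [lra |].
  assert (Hroot : Rpower (y ^ n) (/ INR n) = y).
  { rewrite <- Rpower_pow, Rpower_mult, Rinv_r by lra. apply Rpower_1. lra. }
  rewrite <- Hroot. apply Rle_Rpower_l; [left; apply Rinv_0_lt_compat |]; lra.
Qed.

Lemma one_sub_inv_sqrt_pow_le (n : nat) (t : R) :
  0 < t -> 1 <= INR n * t -> (1 - 1 / sqrt (INR n * t)) ^ n <= t / (1 + t).
Proof.
  intros Ht Hnt.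
  set (r := sqrt (INR n * t)).
  assert (Hrr : r * r = INR n * t) by (apply sqrt_sqrt; lra).
  assert (Hr1 : 1 <= r) by (rewrite <- sqrt_1; apply sqrt_le_1_alt; lra).
  set (s := 1 / r).
  assert (Hs : 0 < s <= 1).
  { unfold s. split; [apply Rdiv_lt_0_compat; lra |].
    apply (Rmult_le_reg_r r); [lra |]. field_simplify; lra. }
  assert (Hn0 : INR n <> 0) by (intro H0; rewrite H0 in Hnt; lra).
  assert (Hns2 : INR n * s * s = / t).
  { replace (INR n * s * s) with (INR n / (r * r)) by (unfold s; field; lra).
    rewrite Hrr. field. lra. }
  assert (Hbern := pow_one_sub_mul_one_add_le n s ltac:(lra)).
  assert (Hpow : 0 <= (1 - s) ^ n) by (apply pow_le; lra).
  (* n s^2 = 1 / t and s <= 1, so 1 + 1 / t <= 1 + n s *)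
  assert (Hcmp : (1 - s) ^ n * (1 + / t) <= 1).
  { apply Rle_trans with ((1 - s) ^ n * (1 + INR n * s)); [| exact Hbern].
    apply Rmult_le_compat_l; [exact Hpow |].
    assert (0 <= INR n * s * (1 - s)) by (apply Rmult_le_pos; [apply Rmult_le_pos; [apply pos_INR |] |]; lra).
    nra. }
  apply (Rmult_le_reg_r ((1 + t) / t)); [apply Rdiv_lt_0_compat; lra |].
  replace (t / (1 + t) * ((1 + t) / t)) with 1 by (field; lra).
  replace ((1 + t) / t) with (1 + / t) by (field; lra).
  exact Hcmp.
Qed.

Lemma nroot_ge_one_sub_inv_sqrt (n : nat) (t x : R) :
  (1 <= n)%nat -> 0 < t -> t / (1 + t) <= x ->
  nroot n x >= 1 - 1 / sqrt (INR n * t).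
Proof.
  intros Hn Ht Hx.
  assert (HnR : 1 <= INR n) by (apply (le_INR 1 n) in Hn; simpl in Hn; lra).
  assert (Hr0 : 0 < sqrt (INR n * t)) by (apply sqrt_lt_R0; nra).
  assert (Hroot0 := nroot_ge0 n x).
  destruct (Rle_dec (INR n * t) 1) as [Hsmall | Hlarge].
  - assert (sqrt (INR n * t) <= 1) by (rewrite <- sqrt_1; apply sqrt_le_1_alt; lra).
    assert (1 <= 1 / sqrt (INR n * t)).
    { apply (Rmult_le_reg_r (sqrt (INR n * t))); [lra |]. field_simplify; lra. }
    lra.
  - apply Rle_ge, nroot_ge_of_pow_le; [exact Hn | |].
    + assert (sqrt 1 < sqrt (INR n * t)) by (apply sqrt_lt_1_alt; lra).
      rewrite sqrt_1 in *.
      assert (1 / sqrt (INR n * t) < 1).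
      { apply (Rmult_lt_reg_r (sqrt (INR n * t))); [lra |]. field_simplify; lra. }
      lra.
    + apply Rle_trans with (t / (1 + t)); [| exact Hx].
      apply one_sub_inv_sqrt_pow_le; lra.
Qed.

Lemma RiemannInt_le_two_steps (f : R -> R) (a b c k1 k2 : R)
    (pr : Riemann_integrable f a b) :
  a <= c <= b ->
  (forall x, a < x < c -> f x <= k1) -> (forall x, c < x < b -> f x <= k2) ->
  RiemannInt pr <= k1 * (c - a) + k2 * (b - c).
Proof.
  intros Hc Hlow Hhigh.
  rewrite <- (RiemannInt_P26 (RiemannInt_P22 pr Hc) (RiemannInt_P23 pr Hc) pr).
  assert (H1 := RiemannInt_P19 (RiemannInt_P22 pr Hc) (RiemannInt_P14 a c k1)
                  (proj1 Hc) Hlow).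
  assert (H2 := RiemannInt_P19 (RiemannInt_P23 pr Hc) (RiemannInt_P14 c b k2)
                  (proj2 Hc) Hhigh).
  rewrite RiemannInt_P15 in H1, H2. lra.
Qed.

Lemma RiemannInt_ge_two_steps (f : R -> R) (a b c k1 k2 : R)
    (pr : Riemann_integrable f a b) :
  a <= c <= b ->
  (forall x, a < x < c -> k1 <= f x) -> (forall x, c < x < b -> k2 <= f x) ->
  k1 * (c - a) + k2 * (b - c) <= RiemannInt pr.
Proof.
  intros Hc Hlow Hhigh.
  rewrite <- (RiemannInt_P26 (RiemannInt_P22 pr Hc) (RiemannInt_P23 pr Hc) pr).
  assert (H1 := RiemannInt_P19 (RiemannInt_P14 a c k1) (RiemannInt_P22 pr Hc)
                  (proj1 Hc) Hlow).
  assert (H2 := RiemannInt_P19 (RiemannInt_P14 c b k2) (RiemannInt_P23 pr Hc)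
                  (proj2 Hc) Hhigh).
  rewrite RiemannInt_P15 in H1, H2. lra.
Qed.

Section ZeroMeanTail.

Variables (G : R -> R) (M lmax : R).
Hypothesis HG : compact_prob_tail G M.

Lemma tail_nonincreasing (x y : R) : x <= y -> G y <= G x.
Proof. exact (proj1 HG x y). Qed.

Lemma tail_ge0 (x : R) : 0 <= G x.
Proof.
  destruct HG as [_ [_ [_ Hright]]].
  rewrite <- (Hright (Rmax x (M + 1))).
  - apply tail_nonincreasing, Rmax_l.
  - pose proof (Rmax_r x (M + 1)). lra.
Qed.

Lemma tail_le1 (x : R) : G x <= 1.
Proof.
  destruct HG as [_ [_ [Hleft _]]].
  destruct (Rle_dec x (- M)) as [Hx | Hx].
  - rewrite Hleft; lra.
  - rewrite <- (Hleft (- M)) by lra. apply tail_nonincreasing. lra.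
Qed.

Lemma support_bound_ge0 : 0 <= M.
Proof.
  destruct HG as [_ [_ [Hleft Hright]]].
  destruct (Rle_dec 0 M) as [HM | HM]; [exact HM |].
  pose proof (Hleft 0 ltac:(lra)). pose proof (Hright 0 ltac:(lra)). lra.
Qed.

Lemma tail_eq1_of_eq1_left (x : R) : (forall u, u < x -> G u = 1) -> G x = 1.
Proof.
  destruct HG as [_ [Hleftcont _]].
  intros Hone.
  apply Rle_antisym; [apply tail_le1 |].
  apply Rnot_lt_le. intros Hlt.
  destruct (Hleftcont x (1 - G x) ltac:(lra)) as [d [Hd Hnear]].
  specialize (Hnear (x - d / 2) ltac:(lra)).
  rewrite Hone in Hnear by lra.
  rewrite Rabs_right in Hnear; lra.
Qed.

Hypothesis Hmax : is_max_supp G lmax.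

Lemma lmax_le_bound : lmax <= M.
Proof.
  destruct HG as [_ [_ [_ Hright]]].
  apply (proj2 Hmax). intros x Hx.
  destruct (Rle_dec x M) as [HxM | HxM]; [exact HxM |].
  rewrite Hright in Hx; lra.
Qed.

Lemma tail_eq0_above_lmax (x : R) : lmax < x -> G x = 0.
Proof.
  intros Hx. destruct (Rlt_dec 0 (G x)) as [Hpos | Hpos].
  - pose proof (proj1 Hmax x Hpos). lra.
  - pose proof (tail_ge0 x). lra.
Qed.

Lemma positive_part_le (pr : Riemann_integrable G 0 M) (u : R) :
  u <= 0 -> RiemannInt pr <= Rmax 0 lmax * G u.
Proof.
  intros Hu.
  assert (HM := support_bound_ge0). assert (HLM := lmax_le_bound).
  assert (Hc : 0 <= Rmax 0 lmax <= M) by (split; [apply Rmax_l | apply Rmax_lub; lra]).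
  apply Rle_trans with (G u * (Rmax 0 lmax - 0) + 0 * (M - Rmax 0 lmax)); [| lra].
  apply RiemannInt_le_two_steps; [exact Hc | |].
  - intros x Hx. apply tail_nonincreasing. lra.
  - intros x Hx. rewrite tail_eq0_above_lmax; [lra |].
    pose proof (Rmax_r 0 lmax). lra.
Qed.

Lemma negative_part_ge (pr : Riemann_integrable (fun x => 1 - G x) (- M) 0) (u : R) :
  u <= 0 -> - u * (1 - G u) <= RiemannInt pr.
Proof.
  intros Hu.
  assert (HM := support_bound_ge0).
  assert (Hint0 : 0 <= RiemannInt pr).
  { apply Rle_trans with (0 * (0 - - M) + 0 * (0 - 0)); [lra |].
    apply RiemannInt_ge_two_steps; [lra | |]; intros x _; pose proof (tail_le1 x); lra. }
  destruct (Rle_dec u (- M)) as [HuM | HuM].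
  - destruct HG as [_ [_ [Hleft _]]]. rewrite Hleft by lra. lra.
  - apply Rle_trans with (0 * (u - - M) + (1 - G u) * (0 - u)); [lra |].
    apply RiemannInt_ge_two_steps; [lra | |].
    + intros x _. pose proof (tail_le1 x). lra.
    + intros x Hx. pose proof (tail_nonincreasing u x ltac:(lra)). lra.
Qed.

Hypothesis Hmean : tail_mean_zero G M.

Lemma zero_mean_tail_bound (u : R) :
  u <= 0 -> - u * (1 - G u) <= Rmax 0 lmax * G u.
Proof.
  destruct Hmean as [pr1 [pr2 Hzero]].
  intros Hu.
  pose proof (positive_part_le pr1 u Hu). pose proof (negative_part_ge pr2 u Hu).
  lra.
Qed.

Lemma lmax_ge0 : 0 <= lmax.
Proof.
  apply Rnot_lt_le. intros Hneg.
  pose proof (zero_mean_tail_bound (lmax / 2) ltac:(lra)) as Hbound.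
  rewrite tail_eq0_above_lmax, Rmax_left in Hbound by lra.
  lra.
Qed.

Lemma tail_ge_at_neg_multiple (t : R) :
  0 < t -> t / (1 + t) <= G (- t * lmax).
Proof.
  intros Ht.
  assert (HL := lmax_ge0).
  assert (Hratio : forall y, t * (1 - y) <= y -> t / (1 + t) <= y).
  { intros y Hy. apply (Rmult_le_reg_r (1 + t)); [lra |].
    unfold Rdiv. rewrite Rmult_assoc, Rinv_l by lra. lra. }
  apply Hratio.
  destruct (Req_dec lmax 0) as [HL0 | HLpos].
  - replace (- t * lmax) with 0 by (rewrite HL0; ring).
    rewrite tail_eq1_of_eq1_left; [lra |].
    intros u Hu.
    pose proof (zero_mean_tail_bound u ltac:(lra)) as Hbound.
    rewrite HL0, Rmax_left in Hbound by lra.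
    pose proof (tail_le1 u).
    assert (1 - G u <= 0) by nra.
    lra.
  - pose proof (zero_mean_tail_bound (- t * lmax) ltac:(nra)) as Hbound.
    rewrite Rmax_right in Hbound by lra.
    apply (Rmult_le_reg_r lmax); lra.
Qed.

End ZeroMeanTail.

Theorem mainTheorem12 (n : nat) (G : R -> R) (M lmax : R) :
  (1 <= n)%nat ->
  compact_prob_tail G M ->
  tail_mean_zero G M ->
  is_max_supp G lmax ->
  concave_below (fun lam => nroot n (G lam)) lmax ->
  forall t : R, 0 < t ->
    nroot n (G (- t * lmax)) >= 1 - 1 / sqrt (INR n * t).
Proof.
  intros Hn HG Hmean Hmax _ t Ht.
  apply nroot_ge_one_sub_inv_sqrt; [exact Hn | exact Ht |].
  exact (tail_ge_at_neg_multiple G M lmax HG Hmax Hmean t Ht).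
Qed.
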